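(* For all $N\in\mathbb{N}$, $$\#\{(q_1,q_2)\in(\tfrac12\mathbb{Z})^2\mid 4q_1^2+4q_2^2+q_1-q_2=N\}=\frac14\,\#\{(x,y)\in\mathbb{Z}^2\mid x^2+y^2=8N+1\}.$$
   Context: In type $C_2^{(1)}$, with coweight lattice $L=\{\sqrt2q_1\varepsilon_1+\sqrt2q_2\varepsilon_2\mid q_1,q_2\in\frac12\mathbb{Z}\}$, the quantity $4q_1^2+4q_2^2+q_1-q_2$ is the $\Lambda_1$-atomic length $\mathcal{L}_{\Lambda_1}(t_q)=\langle\Lambda_1-t_q\Lambda_1,\rho^\vee\rangle$ of $q=\sqrt2q_1\varepsilon_1+\sqrt2q_2\varepsilon_2$; so the left-hand side is $|\widehat{\mathcal{B}_1}(N)|$, the number of $q\in L$ with $\mathcal{L}_{\Lambda_1}(t_q)=N$. *)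

From mathcomp Require Import all_boot all_order all_algebra.
Set Implicit Arguments. Unset Strict Implicit. Unset Printing Implicit Defensive.
Import Order.TTheory GRing.Theory Num.Theory.
Local Open Scope ring_scope.

Definition card_is (T : eqType) (P : T -> Prop) (n : nat) : Prop :=
  exists s : seq T, [/\ uniq s, (forall x, x \in s <-> P x) & size s = n].

Definition half_int (q : rat) : Prop := exists z : int, q = z%:~R / 2.

From mathcomp Require Import all_boot all_order all_algebra.
From mathcomp Require Import zify ring.

Set Implicit Arguments.
Unset Strict Implicit.
Unset Printing Implicit Defensive.
Import Order.TTheory GRing.Theory Num.Theory.
Local Open Scope ring_scope.

(* The affine map q |-> (4(q1 - q2) + 1, 4(q1 + q2)) transforms
   4 q1^2 + 4 q2^2 + q1 - q2 = N into x^2 + y^2 = 8N + 1 and maps the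
   half-integer solutions bijectively onto the normalized integer solutions,
   those with (x, y) = (1, 0) mod 4.  As squares are 0, 1 or 4 mod 8, every
   solution of x^2 + y^2 = 8N + 1 is congruent mod 4 to exactly one of the
   Gaussian units (+-1, 0), (0, +-1); hence multiplication by i^k, k < 4, is a
   bijection from {0,..,3} x {normalized solutions} onto all solutions. *)

Section CardIs.

Variables T U : eqType.

Lemma card_is_subset (P : pred T) (s : seq T) :
  {subset P <= s} -> exists n, card_is (fun x => P x) n.
Proof.
move=> sPs; exists (size [seq x <- undup s | P x]), [seq x <- undup s | P x].
split=> //; first exact/filter_uniq/undup_uniq.
move=> x; rewrite mem_filter mem_undup.
by split=> [/andP[] | Px]; last rewrite Px sPs.
Qed.

Lemma card_is_map (P : T -> Prop) (Q : U -> Prop) (f : T -> U) n :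
  (forall x y, P x -> P y -> f x = f y -> x = y) ->
  (forall y, Q y <-> exists2 x, P x & f x = y) ->
  card_is P n -> card_is Q n.
Proof.
move=> f_inj PfQ [s [s_uniq sP <-]]; exists (map f s); split; last exact: size_map.
- by rewrite map_inj_in_uniq // => x y /sP Px /sP Py; apply: f_inj.
- move=> y; rewrite PfQ; split=> [/mapP[x /sP Px ->]|[x /sP sx <-]].
    by exists x.
  exact: map_f.
Qed.

Lemma card_is_prod (P : T -> Prop) (Q : U -> Prop) m n :
  card_is P m -> card_is Q n -> card_is (fun z : T * U => P z.1 /\ Q z.2) (m * n)%N.
Proof.
move=> [s [s_uniq sP <-]] [t [t_uniq tQ <-]].
exists [seq (x, y) | x <- s, y <- t]; split; last exact: size_allpairs.
- by apply: allpairs_uniq => // -[? ?] [? ?].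
- move=> [x y]; split=> [/allpairsP[[x' y'] [/sP Px /tQ Qy [-> ->]]] //|].
  by case=> /sP sx /tQ ty; apply: allpairs_f.
Qed.

End CardIs.

Lemma card_is_ltn k : card_is (fun i : nat => (i < k)%N) k.
Proof. by exists (iota 0 k); split=> [|i|]; rewrite ?iota_uniq ?mem_iota ?size_iota. Qed.

Definition norm2 (p : int * int) : int := p.1 ^+ 2 + p.2 ^+ 2.

Definition rot (p : int * int) : int * int := (- p.2, p.1).

Definition res4 (p : int * int) : int * int := ((p.1 %% 4)%Z, (p.2 %% 4)%Z).

Definition normalized (M : int) (p : int * int) : bool :=
  (norm2 p == M) && (res4 p == (1, 0)).

Lemma norm2_iter_rot i p : norm2 (iter i rot p) = norm2 p.
Proof. by elim: i => //= i <-; rewrite /norm2 /= sqrrN addrC. Qed.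

Lemma rot_inj : injective rot.
Proof. by move=> [a b] [c d] [/oppr_inj -> ->]. Qed.

Lemma iter_rot_inj i : injective (iter i rot).
Proof. by elim: i => [//|i IH] x y /rot_inj /IH. Qed.

Lemma iter_rot4 p : iter 4 rot p = p.
Proof. by case: p => a b; rewrite /rot /= !opprK. Qed.

Lemma res4_iter_rot i p q : res4 p = res4 q -> res4 (iter i rot p) = res4 (iter i rot q).
Proof.
elim: i => [//|i IH] /IH /=; move: (iter i rot p) (iter i rot q) => [a b] [c d].
by rewrite /res4 /= => -[Eb Ea]; congr pair; lia.
Qed.

Lemma res4_units_inj i j : (i < 4)%N -> (j < 4)%N ->
  res4 (iter i rot (1, 0)) = res4 (iter j rot (1, 0)) -> i = j.
Proof. by move=> + + /eqP; case: i j => [|[|[|[|i]]]] [|[|[|[|j]]]]. Qed.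

Lemma sqr_mod8 (x : int) : (x ^+ 2 = (x %% 4)%Z ^+ 2 %[mod 8])%Z.
Proof.
rewrite {1}(divz_eq x 4); set q := (x %/ 4)%Z; set r := (x %% 4)%Z.
have -> : (q * 4 + r) ^+ 2 = (2 * q ^+ 2 + q * r) * 8 + r ^+ 2 by ring.
by rewrite modzMDl.
Qed.

Lemma res4_norm2_1mod8 p : (norm2 p = 1 %[mod 8])%Z ->
  exists2 i, (i < 4)%N & res4 p = res4 (iter i rot (1, 0)).
Proof.
case: p => x y; rewrite /norm2 /res4 /= -modzDm sqr_mod8 (sqr_mod8 y) modzDm => /eqP.
have : (0 <= x %% 4 < 4)%Z && (0 <= y %% 4 < 4)%Z by apply/andP; split; lia.
case: (x %% 4)%Z (y %% 4)%Z => [[|[|[|[|r]]]]|r] [[|[|[|[|s]]]]|s] //.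
all: by [exists 0%N | exists 1%N | exists 2%N | exists 3%N].
Qed.

Lemma card_is_norm2 M m : (M = 1 %[mod 8])%Z ->
  card_is (fun p => normalized M p) m -> card_is (fun p => norm2 p = M) (4 * m)%N.
Proof.
move=> M1 Am.
apply: (card_is_map (f := fun ip => iter ip.1 rot ip.2)) (card_is_prod (card_is_ltn 4) Am).
- move=> [i p] [j q] /= [i4 /andP[_ /eqP p1]] [j4 /andP[_ /eqP q1]] E.
  have ij : i = j.
    apply: res4_units_inj i4 j4 _.
    by rewrite -(res4_iter_rot i (q := (1, 0)) p1) -(res4_iter_rot j (q := (1, 0)) q1) E.
  by move: E; rewrite ij => /iter_rot_inj ->.
- move=> y; split=> [yM | [[i p] [_ /andP[/eqP <- _]] <-]]; last exact: norm2_iter_rot.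
  have /res4_norm2_1mod8[i i4 yi] : (norm2 y = 1 %[mod 8])%Z by rewrite yM.
  have rotK : iter i rot (iter (4 - i) rot y) = y by rewrite -iterD subnKC ?iter_rot4 // ltnW.
  exists (i, iter (4 - i) rot y) => //; split=> //.
  rewrite /normalized norm2_iter_rot yM eqxx /=.
  by rewrite (res4_iter_rot _ yi) -iterD subnK ?iter_rot4 // ltnW.
Qed.

Lemma normalized_finite M : exists m, card_is (fun p => normalized M p) m.
Proof.
pose k := absz M; pose box := [seq i%:Z - k%:Z | i <- iota 0 (2 * k)%N.+1].
have norm2_box x y : x ^+ 2 + y ^+ 2 = M -> x \in box.
  rewrite !expr2 => xyM; have xk : (- k%:Z <= x <= k%:Z)%R by nia.
  by apply/mapP; exists (absz (x + k%:Z)); rewrite ?mem_iota; lia.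
apply: (card_is_subset (s := [seq (x, y) | x <- box, y <- box])).
move=> [x y] /andP[/eqP xyM _]; apply: allpairs_f; first exact: norm2_box xyM.
by apply: (norm2_box _ x); rewrite addrC.
Qed.

Definition atomic_length (q : rat * rat) : rat :=
  4 * q.1 ^+ 2 + 4 * q.2 ^+ 2 + q.1 - q.2.

(* The inverse of q |-> (4(q1 - q2) + 1, 4(q1 + q2)). *)
Definition half_point (p : int * int) : rat * rat :=
  ((p.1 + p.2 - 1)%:~R / 8, (p.2 - p.1 + 1)%:~R / 8).

Lemma atomic_length_half_point p :
  atomic_length (half_point p) = (norm2 p - 1)%:~R / 8.
Proof. by case: p => x y; rewrite /atomic_length /norm2 /=; field. Qed.

Lemma half_point_inj : injective half_point.
Proof.
move=> [x y] [x' y'] [] /(congr1 ( *%R^~ 8)) + /(congr1 ( *%R^~ 8)).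
by rewrite !divfK // => /intr_inj E1 /intr_inj E2; congr pair; lia.
Qed.

Lemma half_int_half_point N q :
  [/\ half_int q.1, half_int q.2 & atomic_length q = N%:R] <->
  exists2 p, normalized (8 * N + 1)%:R p & half_point p = q.
Proof.
split.
  case: q => _ _ [/= [a ->] [b ->] qN].
  pose p : int * int := (2 * (a - b) + 1, 2 * (a + b)).
  have hp : half_point p = (a%:~R / 2, b%:~R / 2).
    by rewrite /half_point /=; congr pair; field.
  have pN : norm2 p = (8 * N + 1)%:R.
    apply/(@intr_inj rat); rewrite -hp atomic_length_half_point in qN.
    have -> : (norm2 p)%:~R = 8 * ((norm2 p - 1)%:~R / 8) + 1 :> rat by field.
    by rewrite qN; ring.
  have pE : norm2 p = 4 * (2 * (a * a) + 2 * (b * b) + a - b) + 1.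
    by rewrite /norm2 /=; ring.
  exists p => //; rewrite /normalized pN eqxx /res4 /=.
  by apply/eqP; congr pair; lia.
case=> -[x y] /andP[/eqP pN /eqP [x1 y0]] <-; split.
- exists ((x + y - 1) %/ 4)%Z.
  by rewrite /= {1}(_ : x + y - 1 = ((x + y - 1) %/ 4)%Z * 4); [field | lia].
- exists ((y - x + 1) %/ 4)%Z.
  by rewrite /= {1}(_ : y - x + 1 = ((y - x + 1) %/ 4)%Z * 4); [field | lia].
- by rewrite atomic_length_half_point pN; field.
Qed.

Theorem corollary8p13 (N : nat) :
  exists m k : nat,
    [/\ card_is (fun q : rat * rat =>
           [/\ half_int q.1, half_int q.2 &
               4 * q.1 ^+ 2 + 4 * q.2 ^+ 2 + q.1 - q.2 = N%:R]) m,
        card_is (fun p : int * int => p.1 ^+ 2 + p.2 ^+ 2 = (8 * N + 1)%:R) k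
      & (4 * m)%N = k].
Proof.
have [m normalized_m] := normalized_finite (8 * N + 1)%:R.
exists m, (4 * m)%N; split=> //.
- apply: (card_is_map (f := half_point)) normalized_m => [x y _ _|q].
    exact: half_point_inj.
  exact: half_int_half_point.
- by apply: card_is_norm2 normalized_m; lia.
Qed.
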